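(* Let $M>0$, $\delta_0>0$ and $l_0\in\mathbb{R}$, and let $w_0\in L^\infty((-\infty,l_0])$ satisfy $w_0(x)=0$ for all sufficiently large negative $x$. Let $w$ be the (bounded) solution of $w_t=w_{xx}-Mw_x^2$ for $x<l_0$, $t>0$, with $w(x,0)=w_0(x)$ for $x\le l_0$ and $w(l_0,t)=\delta_0$ for $t\ge0$. Then $w(x,t)\to\delta_0$ as $t\to\infty$ locally uniformly in $x\in(-\infty,l_0]$. *)

From HB Require Import structures.
From mathcomp Require Import all_boot all_order all_algebra.
From mathcomp Require Import all_classical all_reals all_analysis.
Set Implicit Arguments. Unset Strict Implicit. Unset Printing Implicit Defensive.
Import Order.TTheory GRing.Theory Num.Theory.
Import numFieldNormedType.Exports.
Local Open Scope classical_set_scope.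
Local Open Scope ring_scope.

(* w0 is an L^oo function on (-oo, l0]: measurable and bounded
   (we take a bounded representative of the L^oo class). *)
Definition Linfty_halfline (R : realType) (l0 : R) (w0 : R -> R) : Prop :=
  measurable_fun `]-oo, l0] w0 /\ exists C : R, forall x, x <= l0 -> `|w0 x| <= C.

Definition vanishes_at_minus_infty (R : realType) (w0 : R -> R) : Prop :=
  exists L : R, forall x, x <= L -> w0 x = 0.

Definition dx (R : realType) (w : R -> R -> R) (x t : R) : R :=
  derive1 (fun y => w y t) x.

(* Bounded classical solution of
     w_t = w_xx - M w_x^2   (x < l0, t > 0),
     w(x,0) = w0(x)  (x <= l0),     w(l0,t) = delta0  (t >= 0).
   w is C^{2,1}-type classical in the open quarter-plane, continuous on
   {x <= l0, t > 0} up to the lateral boundary, and since w0 is only L^oo,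
   the initial datum is attained in L^1_loc((-oo,l0]) as t -> 0+. *)
Definition is_bounded_solution (R : realType) (M l0 delta0 : R)
    (w0 : R -> R) (w : R -> R -> R) : Prop :=
  [/\ (exists C : R, forall x t, x <= l0 -> 0 <= t -> `|w x t| <= C),
      (forall x t, x < l0 -> 0 < t ->
         [/\ derivable (fun y => w y t) x 1,
             (forall y, y < l0 -> derivable (fun z => w z t) y 1),
             derivable (fun y => dx w y t) x 1,
             derivable (fun s => w x s) t 1 &
             derive1 (fun s => w x s) t =
               derive1 (fun y => dx w y t) x - M * (dx w x t) ^+ 2]),
      {within [set p : R * R | p.1 <= l0 /\ 0 < p.2], continuous (fun p => w p.1 p.2)},
      (forall t, 0 <= t -> w l0 t = delta0) &
      ((forall x, x <= l0 -> w x 0 = w0 x) /\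
      (forall a, a <= l0 ->
         (fun t => (\int[lebesgue_measure]_(x in `[a, l0]) (`|w x t - w0 x|)%:E)%E)
           @ 0^'+ --> 0%E))].

Definition loc_unif_cvg_halfline (R : realType) (l0 : R) (w : R -> R -> R) (c : R)
  : Prop :=
  forall a, a <= l0 -> forall eps : R, 0 < eps ->
    exists T : R, forall t, T <= t -> forall x, a <= x -> x <= l0 ->
      `|w x t - c| < eps.

(* The Hopf-Cole substitution u = exp (- M w) turns w_t = w_xx - M w_x^2 into
   the heat equation u_t = u_xx; u is bounded and equals c = exp (- M delta0) on
   the lateral boundary x = l0, so it suffices to show that a bounded solution
   of the heat equation on a half-line converges locally uniformly to its
   constant Dirichlet datum.  Applied to u and -u, this reduces to an eventual
   upper bound u <= c + eps on [a, l0], which the maximum principle on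
   [l0 - L, l0] x [1, t] gives by comparison with the barrier
     c + eps + (2K/L) (l0 - x) + A exp (- 2 (t - 1) / L^2) (l0 - x) (2L - (l0 - x)).
   The linear term dominates u at x = l0 - L and is below eps on [a, l0] when L
   is large; at t = 1 continuity of u at (l0, 1) controls u near l0 and the
   hump controls it elsewhere; the hump is concave in x with curvature matched
   to its decay rate, which makes the barrier a supersolution, and it decays as
   t grows. *)

From HB Require Import structures.
From mathcomp Require Import all_boot all_order all_algebra.
From mathcomp Require Import all_classical all_reals all_analysis.
From mathcomp Require Import ring lra.
Set Implicit Arguments. Unset Strict Implicit. Unset Printing Implicit Defensive.
Import Order.TTheory GRing.Theory Num.Theory.
Import numFieldNormedType.Exports.
Local Open Scope classical_set_scope.
Local Open Scope ring_scope.

Section extrema.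
Context {R : realType}.
Implicit Types (f g dg : R -> R) (a b x d : R).

Lemma is_derive1_quotient_cvg f x d : is_derive x 1 f d ->
  (fun h => h^-1 * (f (h + x) - f x)) @ 0^' --> d.
Proof.
move=> fd; have [fdx <-] := fd.
by apply: cvg_trans fdx; apply: near_eq_cvg; near=> h; rewrite /= [h%:A]mulr1.
Unshelve. all: by end_near. Qed.

Lemma ge0_derive1_at_right_max f a x d : a < x -> is_derive x 1 f d ->
  (forall y, a < y -> y <= x -> f y <= f x) -> 0 <= d.
Proof.
move=> ax fd fmax.
have Hq : (fun h => h^-1 * (f (h + x) - f x)) @ 0^'- --> d.
  apply: cvg_trans (is_derive1_quotient_cvg fd); apply: cvg_app.
  by apply: within_subset => h /lt_eqF ->.
apply: (ler_cvg_to (cvg_cst 0) Hq).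
near=> h; rewrite nmulr_rge0 ?invr_lt0 ?subr_le0; last by near: h; exact: nbhs_left_lt.
apply: fmax; last by rewrite gerDr; near: h; exact: nbhs_left_le.
by rewrite -ltrBlDr; near: h; apply: nbhs_left_gt; rewrite subr_lt0.
Unshelve. all: by end_near. Qed.

Lemma le0_derive2_at_max g dg a b x d : x \in `]a, b[ ->
  (forall y, y \in `]a, b[ -> is_derive y 1 g (dg y)) -> is_derive x 1 dg d ->
  (forall y, y \in `]a, b[ -> g y <= g x) -> d <= 0.
Proof.
move=> xab gd dgd gmax; rewrite leNgt; apply/negP => d_gt0.
have [ax xb] : a < x /\ x < b by move: xab; rewrite in_itv => /andP.
have dgx0 : dg x = 0.
  have [_ <-] := gd x xab.
  have [_ //] : is_derive x 1 g 0.
  by apply: (derive1_at_max (ltW (lt_trans ax xb)) _ xab gmax) => y /gd [].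
have /nbhs_ballP[e /= e_gt0 dg_gt0] :
    \forall h \near 0^'+, 0 < dg (h + x) /\ h + x < b.
  near=> h; split.
    have hgt0 : 0 < h by near: h; exact: nbhs_right_gt.
    suff : 0 < h^-1 * (dg (h + x) - dg x) by rewrite dgx0 subr0 pmulr_rgt0 ?invr_gt0.
    near: h; apply: cvgr_gt d_gt0; apply: cvg_trans (is_derive1_quotient_cvg dgd).
    by apply: cvg_app; apply: within_subset => h /gt_eqF ->.
  by rewrite -ltrBrDr; near: h; apply: nbhs_right_lt; rewrite subr_gt0.
pose y := x + e / 2.
have xy : x < y by rewrite ltrDl divr_gt0.
have dg_gt0_xy z : x < z -> z <= y -> 0 < dg z /\ z < b.
  move=> xz zy; rewrite -(subrK x z); apply: dg_gt0; last by rewrite subr_gt0.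
  rewrite /ball /= sub0r normrN gtr0_norm ?subr_gt0 // ltrBlDl.
  by rewrite (le_lt_trans zy) // ltrD2l ltr_pdivrMr // ltr_pMr // ltr1n.
have yb : y < b by have [] := dg_gt0_xy y xy (lexx y).
have sub_ab z : z \in `[x, y] -> z \in `]a, b[.
  by rewrite !in_itv /= => /andP[xz zy]; rewrite (lt_le_trans ax xz) (le_lt_trans zy yb).
have [|z] := MVT xy (fun z zxy => gd z (sub_ab z (subset_itv_oo_cc zxy))).
  by apply: derivable_within_continuous => z /sub_ab /gd [].
rewrite in_itv /= => /andP[xz zy] gyx.
have [dgz_gt0 _] := dg_gt0_xy z xz (ltW zy).
have := gmax y (sub_ab y _); rewrite in_itv /= (ltW xy) lexx => /(_ isT).
by rewrite -subr_le0 gyx pmulr_lle0 ?subr_gt0 // leNgt dgz_gt0.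
Unshelve. all: by end_near. Qed.
End extrema.

Section maximum_principle.
Context {R : realType}.
Variables (a b t0 T : R).
Implicit Types (F Fx Fxx Ft : R -> R -> R).

Lemma heat_strict_max_principle F Fx Fxx Ft :
  {within `[a, b] `*` `[t0, T], continuous (fun p => F p.1 p.2)} ->
  (forall x t, x \in `]a, b[ -> t \in `]t0, T] -> is_derive x 1 (F^~ t) (Fx x t)) ->
  (forall x t, x \in `]a, b[ -> t \in `]t0, T] -> is_derive x 1 (Fx^~ t) (Fxx x t)) ->
  (forall x t, x \in `]a, b[ -> t \in `]t0, T] -> is_derive t 1 (F x) (Ft x t)) ->
  (forall x t, x \in `]a, b[ -> t \in `]t0, T] -> Ft x t < Fxx x t) ->
  (forall t, t \in `[t0, T] -> F a t <= 0 /\ F b t <= 0) ->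
  (forall x, x \in `[a, b] -> F x t0 <= 0) ->
  forall x t, x \in `[a, b] -> t \in `[t0, T] -> F x t <= 0.
Proof.
move=> F_cont F_x Fx_x F_t F_lt F_lat F_ini x t xab tT.
have inQ y s : y \in `[a, b] -> s \in `[t0, T] -> (y, s) \in `[a, b] `*` `[t0, T].
  by move=> yab sT; rewrite inE.
have cQ : compact (`[a, b] `*` `[t0, T]) by apply: compact_setX; exact: segment_compact.
have [[xm tm] /[!inE] -[/= xm_ab tm_T] F_max] :=
  compact_EVT_max (ex_intro _ (x, t) (set_mem (inQ x t xab tT))) cQ F_cont.
apply: le_trans (F_max (x, t) (inQ x t xab tT)) _.
rewrite leNgt; apply/negP => Fm_gt0.
have [Fa Fb] := F_lat tm tm_T.
have xm_oo : xm \in `]a, b[.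
  rewrite in_itv /= !lt_neqAle !(itvP xm_ab) !andbT.
  apply/andP; split; apply: (contraTneq _ Fm_gt0).
    by move=> <-; rewrite -leNgt.
  by move=> ->; rewrite -leNgt.
have tm_oc : tm \in `]t0, T].
  rewrite in_itv /= lt_neqAle !(itvP tm_T) !andbT.
  by apply: (contraTneq _ Fm_gt0) => <-; rewrite -leNgt F_ini.
have := F_lt xm tm xm_oo tm_oc; apply/negP; rewrite -leNgt.
apply: (@le_trans _ _ 0).
  apply: (le0_derive2_at_max xm_oo (fun y yab => F_x y tm yab tm_oc)
    (Fx_x xm tm xm_oo tm_oc)).
  by move=> y yab; apply: (F_max (y, tm)); exact: inQ (subset_itv_oo_cc yab) tm_T.
have t0_tm : t0 < tm by rewrite (itvP tm_oc).
apply: (ge0_derive1_at_right_max t0_tm (F_t xm tm xm_oo tm_oc)).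
move=> s t0s stm; apply: (F_max (xm, s)); apply: inQ => //; rewrite in_itv /= ltW //.
by rewrite (le_trans stm) ?(itvP tm_T).
Qed.

Lemma heat_max_principle F Fx Fxx Ft :
  {within `[a, b] `*` `[t0, T], continuous (fun p => F p.1 p.2)} ->
  (forall x t, x \in `]a, b[ -> t \in `]t0, T] -> is_derive x 1 (F^~ t) (Fx x t)) ->
  (forall x t, x \in `]a, b[ -> t \in `]t0, T] -> is_derive x 1 (Fx^~ t) (Fxx x t)) ->
  (forall x t, x \in `]a, b[ -> t \in `]t0, T] -> is_derive t 1 (F x) (Ft x t)) ->
  (forall x t, x \in `]a, b[ -> t \in `]t0, T] -> Ft x t <= Fxx x t) ->
  (forall t, t \in `[t0, T] -> F a t <= 0 /\ F b t <= 0) ->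
  (forall x, x \in `[a, b] -> F x t0 <= 0) ->
  forall x t, x \in `[a, b] -> t \in `[t0, T] -> F x t <= 0.
Proof.
move=> F_cont F_x Fx_x F_t F_le F_lat F_ini x t xab tT.
have t0_t : t0 <= t by rewrite (itvP tT).
apply/ler_addgt0Pr => e e_gt0; rewrite add0r.
pose d := e / (t - t0 + 1).
have d_gt0 : 0 < d by rewrite divr_gt0 // ltr_wpDl // subr_ge0.
have d_le : d * (t - t0) <= e.
  by rewrite mulrAC ler_pdivrMr ?ltr_wpDl ?subr_ge0 //; nra.
suff : F x t - d * (t - t0) <= 0 by lra.
apply: (heat_strict_max_principle (F := fun y s => F y s - d * (s - t0))
  (Fx := Fx) (Fxx := Fxx) (Ft := fun y s => Ft y s - d)) => //.
- have dt_cont : continuous (fun p : R * R => d * (p.2 - t0)).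
    move=> q; apply: cvgM; first exact: cvg_cst.
    by apply: cvgB; [exact: cvg_snd | exact: cvg_cst].
  move=> p; apply: (@continuousB _ _ (subspace (`[a, b] `*` `[t0, T]))
    (fun p => F p.1 p.2) (fun p => d * (p.2 - t0))).
    exact: F_cont.
  exact: (continuous_subspaceT dt_cont).
- by move=> y s yab sT; have := F_x y s yab sT => ?; apply: is_derive_eq; rewrite subr0.
- move=> y s yab sT; have := F_t y s yab sT => ?.
  by apply: is_derive_eq; rewrite /GRing.scale /= subr0 mulr1.
- by move=> y s yab sT; rewrite ltrBlDr (le_lt_trans (F_le y s yab sT)) ?ltrDl.
- move=> s sT; have [Fa Fb] := F_lat s sT.
  have ds_ge0 : 0 <= d * (s - t0) by rewrite mulr_ge0 ?(ltW d_gt0) // subr_ge0 (itvP sT).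
  split; lra.
- by move=> y yab; rewrite subrr mulr0 subr0 F_ini.
Qed.
End maximum_principle.

Section heat_halfline.
Context {R : realType}.

Lemma mulr_2subr_le_sqr (L z : R) : z * (2 * L - z) <= L ^+ 2.
Proof.
rewrite -subr_ge0 (_ : _ - _ = (L - z) ^+ 2); last by ring.
exact: sqr_ge0.
Qed.

Lemma mulr_expRN_le (B eps mu s : R) : 0 <= B -> 0 < eps -> 0 < mu ->
  B / (eps * mu) <= s -> B * expR (- (mu * s)) <= eps.
Proof.
move=> B_ge0 eps_gt0 mu_gt0; rewrite ler_pdivrMr ?mulr_gt0 // => Bs.
rewrite expRN ler_pdivrMr ?expR_gt0 // (le_trans Bs) // mulrCA ler_pM2l // mulrC.
by rewrite (le_trans _ (expR_ge1Dx _)) // lerDr.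
Qed.

Definition heat_barrier (l0 L c0 k A mu : R) (x t : R) : R :=
  c0 + k * (l0 - x) + A * expR (- (mu * (t - 1))) * ((l0 - x) * (2 * L - (l0 - x))).

Lemma heat_barrier_continuous l0 L c0 k A mu :
  continuous (fun p : R * R => heat_barrier l0 L c0 k A mu p.1 p.2).
Proof.
have l0B : continuous (fun p : R * R => l0 - p.1).
  by move=> p; apply: cvgB; [exact: cvg_cst | exact: cvg_fst].
move=> p; apply: cvgD.
  by apply: cvgD; [exact: cvg_cst | apply: cvgM; [exact: cvg_cst | exact: l0B]].
apply: cvgM; last by apply: cvgM; [exact: l0B | apply: cvgB; [exact: cvg_cst | exact: l0B]].
apply: cvgM; first exact: cvg_cst.
apply: (@continuous_comp _ _ _ (fun q : R * R => - (mu * (q.2 - 1))) expR).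
  apply: cvgN; apply: cvgM; first exact: cvg_cst.
  by apply: cvgB; [exact: cvg_snd | exact: cvg_cst].
exact: continuous_expR.
Qed.

(* [uxx] is both the second space derivative and the time derivative of [u]:
   this is the heat equation u_t = u_xx. *)
Record heat_halfline_solution (l0 c K : R) (u ux uxx : R -> R -> R) : Prop := {
  heat_bounded : forall x t : R, x <= l0 -> 0 < t -> `|u x t| <= K;
  heat_boundary : forall t : R, 0 < t -> u l0 t = c;
  heat_continuous :
    {within [set p : R * R | p.1 <= l0 /\ 0 < p.2], continuous (fun p => u p.1 p.2)};
  heat_x : forall x t : R, x < l0 -> 0 < t -> is_derive x 1 (u^~ t) (ux x t);
  heat_xx : forall x t : R, x < l0 -> 0 < t -> is_derive x 1 (ux^~ t) (uxx x t);
  heat_t : forall x t : R, x < l0 -> 0 < t -> is_derive t 1 (u x) (uxx x t) }.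

Lemma heat_halfline_solutionN l0 c K u ux uxx :
  heat_halfline_solution l0 c K u ux uxx ->
  heat_halfline_solution l0 (- c) K (fun x t => - u x t) (fun x t => - ux x t)
    (fun x t => - uxx x t).
Proof.
case=> u_bd u_l0 u_cont u_x ux_x u_t; split.
- by move=> x t xl0 t_gt0; rewrite normrN u_bd.
- by move=> t t_gt0; rewrite u_l0.
- by move=> p; apply: continuousN; exact: u_cont.
- by move=> x t xl0 t_gt0; have := u_x x t xl0 t_gt0 => ?; exact: is_derive_eq.
- by move=> x t xl0 t_gt0; have := ux_x x t xl0 t_gt0 => ?; exact: is_derive_eq.
- by move=> x t xl0 t_gt0; have := u_t x t xl0 t_gt0 => ?; exact: is_derive_eq.
Qed.

Variables (l0 c K : R) (u ux uxx : R -> R -> R).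
Hypothesis hu : heat_halfline_solution l0 c K u ux uxx.

Lemma heat_initial_lt_near_boundary eps : 0 < eps ->
  exists2 eta, 0 < eta & forall x, l0 - eta <= x -> x <= l0 -> u x 1 < c + eps.
Proof.
move=> eps_gt0; have [_ u_l0 u_cont _ _ _] := hu.
have u_l0_lt : u l0 1 < c + eps by rewrite u_l0 // ltrDl.
have := u_cont (l0, 1) => /cvgr_lt /(_ _ u_l0_lt) u_near.
have : \forall p \near within [set p : R * R | p.1 <= l0 /\ 0 < p.2] (nbhs ((l0, 1) : R * R)),
    u p.1 p.2 < c + eps by rewrite nbhs_subspace_in //=; split.
move=> /nbhs_ballP[r /= r_gt0 u_lt].
exists (r / 2) => [|x xl0 x_le]; first by rewrite divr_gt0.
apply: (u_lt (x, 1)); last by [].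
split; rewrite /ball /= ?subrr ?normr0 // ger0_norm ?subr_ge0 //.
lra.
Qed.

Lemma heat_le_supersolution (phi phix phixx phit : R -> R -> R) L T :
  continuous (fun p : R * R => phi p.1 p.2) ->
  (forall x t, x \in `]l0 - L, l0[ -> t \in `]1, T] -> is_derive x 1 (phi^~ t) (phix x t)) ->
  (forall x t, x \in `]l0 - L, l0[ -> t \in `]1, T] -> is_derive x 1 (phix^~ t) (phixx x t)) ->
  (forall x t, x \in `]l0 - L, l0[ -> t \in `]1, T] -> is_derive t 1 (phi x) (phit x t)) ->
  (forall x t, x \in `]l0 - L, l0[ -> t \in `]1, T] -> phixx x t <= phit x t) ->
  (forall t, t \in `[1, T] -> u (l0 - L) t <= phi (l0 - L) t /\ u l0 t <= phi l0 t) ->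
  (forall x, x \in `[l0 - L, l0] -> u x 1 <= phi x 1) ->
  forall x t, x \in `[l0 - L, l0] -> t \in `[1, T] -> u x t <= phi x t.
Proof.
move=> phi_cont phi_x phix_x phi_t phi_super phi_lat phi_ini x t xL tT.
have [_ _ u_cont u_x ux_x u_t] := hu.
have inQ y s : y \in `]l0 - L, l0[ -> s \in `]1, T] -> y < l0 /\ 0 < s.
  by rewrite !in_itv /= => /andP[_ ->] /andP[s_gt1 _]; split=> //; exact: lt_trans s_gt1.
rewrite -subr_le0; apply: (@heat_max_principle R (l0 - L) l0 1 T
  (fun y s => u y s - phi y s) (fun y s => ux y s - phix y s)
  (fun y s => uxx y s - phixx y s) (fun y s => uxx y s - phit y s)) => //.
- move=> p; apply: (@continuousB _ _ (subspace (`[l0 - L, l0] `*` `[1, T]))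
    (fun p => u p.1 p.2) (fun p => phi p.1 p.2)).
    apply: (continuous_subspaceW _ u_cont) => -[y s] [/=]; rewrite !in_itv /=.
    by move=> /andP[_ ->] /andP[s_ge1 _]; split=> //; exact: lt_le_trans s_ge1.
  exact: (continuous_subspaceT phi_cont).
- move=> y s ys sT; have [yl0 s_gt0] := inQ y s ys sT.
  exact: is_deriveB (u_x y s yl0 s_gt0) (phi_x y s ys sT).
- move=> y s ys sT; have [yl0 s_gt0] := inQ y s ys sT.
  exact: is_deriveB (ux_x y s yl0 s_gt0) (phix_x y s ys sT).
- move=> y s ys sT; have [yl0 s_gt0] := inQ y s ys sT.
  exact: is_deriveB (u_t y s yl0 s_gt0) (phi_t y s ys sT).
- by move=> y s ys sT; rewrite lerD2l lerN2 phi_super.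
- by move=> s sT; rewrite !subr_le0; exact: phi_lat.
- by move=> y yL; rewrite subr_le0 phi_ini.
Qed.

Lemma heat_le_barrier eps eta L : 0 < eps -> 0 < eta -> eta <= L ->
  (forall x, l0 - eta <= x -> x <= l0 -> u x 1 < c + eps) ->
  forall x t, x \in `[l0 - L, l0] -> 1 <= t ->
  u x t <= heat_barrier l0 L (c + eps) (2 * K / L) (2 * K / (eta * L)) (2 / L ^+ 2) x t.
Proof.
move=> eps_gt0 eta_gt0 etaL u_near x t xL t_ge1.
have [u_bd u_l0 _ _ _ _] := hu.
have L_gt0 : 0 < L := lt_le_trans eta_gt0 etaL.
have /andP[Kc cK] : - K <= c <= K by rewrite -ler_norml -(u_l0 1) ?u_bd.
set k := 2 * K / L; set A := 2 * K / (eta * L); set mu := 2 / L ^+ 2.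
have kL : k * L = 2 * K by rewrite /k mulfVK ?gt_eqF.
have AetaL : A * (eta * L) = 2 * K by rewrite /A mulfVK ?gt_eqF ?mulr_gt0.
have k_ge0 : 0 <= k by apply: divr_ge0; lra.
have A_ge0 : 0 <= A by apply: divr_ge0; [lra | exact/ltW/mulr_gt0].
pose g s := expR (- (mu * (s - 1))).
pose h y := (l0 - y) * (2 * L - (l0 - y)).
have Ag_ge0 s : 0 <= A * g s by apply: mulr_ge0 => //; exact: expR_ge0.
apply: (heat_le_supersolution (phix := fun y s => - k + A * g s * (2 * (l0 - y) - 2 * L))
  (phixx := fun y s => - 2 * A * g s) (phit := fun y s => - mu * A * g s * h y)
  (L := L) (T := t)) => //.
- exact: heat_barrier_continuous.
- by move=> y s _ _; apply: is_derive_eq; rewrite /GRing.scale /g /h /=; ring.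
- by move=> y s _ _; apply: is_derive_eq; rewrite /GRing.scale /g /=; ring.
- by move=> y s _ _; apply: is_derive_eq; rewrite /GRing.scale /g /h /=; ring.
- move=> y s _ _; have muh : mu * h y <= 2.
    by rewrite /mu mulrAC ler_pdivrMr ?exprn_gt0 // ler_pM2l // mulr_2subr_le_sqr.
  rewrite -subr_ge0 (_ : _ - _ = A * g s * (2 - mu * h y)); last by ring.
  by apply: mulr_ge0; rewrite ?subr_ge0.
- move=> s; rewrite in_itv /= => /andP[s_ge1 _]; have s_gt0 : 0 < s by lra.
  have hL : h (l0 - L) = L ^+ 2 by rewrite /h; ring.
  have h0 : h l0 = 0 by rewrite /h subrr mul0r.
  rewrite /heat_barrier -/(g s) -/(h (l0 - L)) -/(h l0) hL h0 u_l0 // subrr mulr0 !addr0.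
  have -> : l0 - (l0 - L) = L by ring.
  have := mulr_ge0 (Ag_ge0 s) (sqr_ge0 L).
  have : `|u (l0 - L) s| <= K by apply: u_bd => //; lra.
  by rewrite ler_norml => /andP[_ ?]; split; lra.
- move=> y /[dup] yL; rewrite in_itv /= => /andP[yL1 yl0].
  rewrite /heat_barrier -/(g 1) -/(h y) /g subrr mulr0 oppr0 expR0 mulr1.
  have ky_ge0 : 0 <= k * (l0 - y) by apply: mulr_ge0 => //; lra.
  have Ah_ge0 : 0 <= A * h y by apply: mulr_ge0 => //; rewrite /h; apply: mulr_ge0; lra.
  have [y_near | y_far] := leP (l0 - y) eta.
    by have := u_near y (ltac:(lra)) yl0; lra.
  have : A * (eta * L) <= A * h y by apply: ler_wpM2l => //; rewrite /h; apply: ler_pM; lra.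
  have : `|u y 1| <= K by exact: u_bd.
  by rewrite ler_norml => /andP[_ ?]; lra.
- by rewrite in_itv /= t_ge1 lexx.
Qed.

Lemma heat_halfline_eventually_le a eps : a <= l0 -> 0 < eps ->
  exists T, forall t x, T <= t -> a <= x -> x <= l0 -> u x t <= c + 3 * eps.
Proof.
move=> al0 eps_gt0; have [u_bd _ _ _ _ _] := hu.
have K_ge0 : 0 <= K by exact: le_trans (normr_ge0 _) (u_bd l0 1 (lexx _) ltr01).
have [eta eta_gt0 u_near] := heat_initial_lt_near_boundary eps_gt0.
have q_ge0 : 0 <= 2 * K * (l0 - a) / eps by rewrite divr_ge0 ?mulr_ge0 ?subr_ge0 // ltW.
pose L := eta + (l0 - a) + 2 * K * (l0 - a) / eps.
have [L_gt0 etaL aL] : [/\ 0 < L, eta <= L & l0 - L <= a] by rewrite /L; split; lra.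
have KL_le : 2 * K * (l0 - a) <= eps * L.
  rewrite /L !mulrDr (mulrC eps (_ / eps)) divfK ?gt_eqF //.
  have := mulr_ge0 (ltW eps_gt0) (ltW eta_gt0).
  have : 0 <= eps * (l0 - a) by rewrite mulr_ge0 ?subr_ge0 // ltW.
  lra.
set A := 2 * K / (eta * L); set mu := 2 / L ^+ 2.
have A_ge0 : 0 <= A by rewrite divr_ge0 ?mulr_ge0 // ltW // mulr_gt0.
have mu_gt0 : 0 < mu by rewrite divr_gt0 ?exprn_gt0.
have AL_ge0 : 0 <= A * L ^+ 2 by rewrite mulr_ge0 ?sqr_ge0.
exists (1 + A * L ^+ 2 / (eps * mu)) => t x Tt ax xl0.
have decay : A * L ^+ 2 * expR (- (mu * (t - 1))) <= eps.
  by apply: mulr_expRN_le => //; rewrite lerBrDl.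
have t_ge1 : 1 <= t.
  by apply: le_trans Tt; rewrite lerDl divr_ge0 // ltW // mulr_gt0.
apply: le_trans (heat_le_barrier eps_gt0 eta_gt0 etaL u_near _ t_ge1) _.
  by rewrite in_itv /= xl0 (le_trans aL).
rewrite /heat_barrier -/A -/mu.
have : 2 * K / L * (l0 - x) <= eps.
  rewrite mulrAC ler_pdivrMr // (le_trans _ KL_le) // ler_wpM2l ?mulr_ge0 //.
  by rewrite lerD2l lerN2.
have : A * expR (- (mu * (t - 1))) * ((l0 - x) * (2 * L - (l0 - x))) <= eps.
  apply: le_trans decay; rewrite [leRHS]mulrAC.
  by apply: ler_wpM2l; [exact: mulr_ge0 (expR_ge0 _) | exact: mulr_2subr_le_sqr].
lra.
Qed.

End heat_halfline.

Section heat_halfline_limit.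
Context {R : realType}.

Lemma heat_halfline_cvg (l0 c K : R) (u ux uxx : R -> R -> R) :
  heat_halfline_solution l0 c K u ux uxx -> loc_unif_cvg_halfline l0 u c.
Proof.
move=> hu a al0 eps eps_gt0.
have e_gt0 : 0 < eps / 4 by rewrite divr_gt0.
have [T1 u_le] := heat_halfline_eventually_le hu al0 e_gt0.
have [T2 u_ge] := heat_halfline_eventually_le (heat_halfline_solutionN hu) al0 e_gt0.
exists (Num.max T1 T2) => t; rewrite ge_max => /andP[T1t T2t] x ax xl0.
have := u_le t x T1t ax xl0; have := u_ge t x T2t ax xl0.
by move=> ? ?; rewrite ltr_norml; apply/andP; split; lra.
Qed.

Lemma loc_unif_cvg_halfline_comp (l0 c : R) (u : R -> R -> R) (f : R -> R) :
  {for c, continuous f} -> loc_unif_cvg_halfline l0 u c ->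
  loc_unif_cvg_halfline l0 (fun x t => f (u x t)) (f c).
Proof.
move=> f_cont u_cvg a al0 eps eps_gt0.
have /nbhs_ballP[d /= d_gt0 f_near] : \forall y \near c, `|f c - f y| < eps.
  by move: f_cont => /cvgrPdist_lt/(_ eps eps_gt0).
have [T u_near] := u_cvg a al0 d d_gt0.
exists T => t Tt x ax xl0; rewrite distrC; apply: f_near.
by rewrite /ball /= distrC; exact: u_near.
Qed.

End heat_halfline_limit.

Section hopf_cole.
Context {R : realType}.

Definition hopf_cole (M : R) (w : R -> R -> R) x t := expR (- (M * w x t)).

Lemma bounded_solution_hopf_cole (M l0 delta0 : R) (w0 : R -> R) (w : R -> R -> R) :
  is_bounded_solution M l0 delta0 w0 w ->
  exists K, heat_halfline_solution l0 (expR (- (M * delta0))) K (hopf_cole M w)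
    (fun x t => - M * dx w x t * hopf_cole M w x t)
    (fun x t => - M * derive1 (w x) t * hopf_cole M w x t).
Proof.
case=> -[C w_bd] w_pde w_cont w_l0 _.
have d1 (f : R -> R) y : derivable f y 1 -> is_derive y 1 f (derive1 f y).
  by move=> /derivableP; rewrite derive1E.
exists (expR (`|M| * C)); split.
- move=> x t xl0 t_gt0; rewrite ger0_norm ?expR_ge0 // ler_expR.
  rewrite (le_trans (ler_norm _)) // normrN normrM ler_wpM2l //.
  exact: w_bd (ltW t_gt0).
- by move=> t t_gt0; rewrite /hopf_cole w_l0 // ltW.
- move=> p; apply: (@continuous_comp (subspace [set p : R * R | p.1 <= l0 /\ 0 < p.2]) _ _
    (fun q : R * R => - (M * w q.1 q.2)) expR).
    by apply: cvgN; apply: cvgM; [exact: cvg_cst | exact: w_cont].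
  exact: continuous_expR.
- move=> x t xl0 t_gt0; have [/d1 w_x _ _ _ _] := w_pde x t xl0 t_gt0.
  by rewrite /hopf_cole; apply: is_derive_eq; rewrite /GRing.scale /dx /=; ring.
- move=> x t xl0 t_gt0; have [/d1 w_x _ /d1 wx_x _ ->] := w_pde x t xl0 t_gt0.
  by rewrite /hopf_cole; apply: is_derive_eq; rewrite /GRing.scale /dx /=; ring.
- move=> x t xl0 t_gt0; have [_ _ _ /d1 w_t _] := w_pde x t xl0 t_gt0.
  by rewrite /hopf_cole; apply: is_derive_eq; rewrite /GRing.scale /=; ring.
Qed.

End hopf_cole.

Theorem lemma3p3 (R : realType) (M delta0 l0 : R) (w0 : R -> R) (w : R -> R -> R)
  (hM : 0 < M) (hdelta0 : 0 < delta0)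
  (hw0 : Linfty_halfline l0 w0) (hw0neg : vanishes_at_minus_infty w0)
  (hw : is_bounded_solution M l0 delta0 w0 w) :
  loc_unif_cvg_halfline l0 w delta0.
Proof.
have [K hu] := bounded_solution_hopf_cole hw.
have hopf_coleK v : - ln (expR (- (M * v))) / M = v.
  by rewrite expRK opprK mulrC mulKf ?gt_eqF.
have ln_cont : {for expR (- (M * delta0)), continuous (fun y => - ln y / M)}.
  by apply: cvgM; [apply: cvgN; exact: continuous_ln (expR_gt0 _) | exact: cvg_cst].
have := loc_unif_cvg_halfline_comp ln_cont (heat_halfline_cvg hu).
rewrite hopf_coleK (_ : (fun x t => _) = w) //.
by apply/funext => x; apply/funext => t; exact: hopf_coleK.
Qed.
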